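(* Let $M\in\mathbb{N}$, let $I$ be a finite set and let $g_\bullet\colon\mathbb{Z}\to\{0,1,\dots,M-1\}$ be a gp map parametrised by $\mathbb{R}^I$. Then there exist a finite set $J$ and a gp map $\tilde g_\bullet\colon\mathbb{Z}\to\{0,1,\dots,M-1\}$ parametrised by $[0,1)^J$ such that $\tilde g_\bullet$ extends $g_\bullet$.
   Context: A generalised polynomial (gp) map $\mathbb{R}^d\to\mathbb{R}$ is an element of the smallest family containing all polynomial maps and closed under pointwise sum, pointwise product and pointwise integer part; a map into $\mathbb{R}^m$ is gp if each coordinate is. For pairwise disjoint finite sets $I_r,I_i,I_f$ and $\Omega = \mathbb{R}^{I_r}\times\mathbb{Z}^{I_i}\times[0,1)^{I_f}$, a gp map $\mathbb{Z}\to S$ ($S\subset\mathbb{R}$) parametrised by $\Omega$ is a family $(g_\alpha)_{\alpha\in\Omega}$ of maps $\mathbb{Z}\to S$ such that $(\alpha,n)\mapsto g_\alpha(n)$ is the restriction to $\Omega\times\mathbb{Z}$ of a gp map $\mathbb{R}^{I_r\cup I_i\cup I_f}\times\mathbb{R}\to\mathbb{R}$. If $g_\bullet$ is parametrised by $\Omega$ and $h_\bullet$ by $\Omega'=\mathbb{R}^{J_r}\times\mathbb{Z}^{J_i}\times[0,1)^{J_f}$, then $h_\bullet$ extends $g_\bullet$ if there is a gp map $\varphi\colon\mathbb{R}^{I_r\cup I_i\cup I_f}\to\mathbb{R}^{J_r\cup J_i\cup J_f}$ with $\varphi(\Omega)\subset\Omega'$ and $g_\alpha=h_{\varphi(\alpha)}$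 for all $\alpha\in\Omega$. *)

From Stdlib Require Import Reals ZArith.
From mathcomp Require Import ssreflect ssrbool eqtype fintype.
Open Scope R_scope.

(* Pointwise integer part (floor): Int_part x = up x - 1 = floor x. *)
Definition gp_floor (x : R) : R := IZR (Int_part x).

Inductive gp {K : finType} : ((K -> R) -> R) -> Prop :=
| gp_const (c : R) : gp (fun _ => c)
| gp_coord (k : K) : gp (fun x => x k)
| gp_add f g : gp f -> gp g -> gp (fun x => f x + g x)
| gp_mul f g : gp f -> gp g -> gp (fun x => f x * g x)
| gp_int f : gp f -> gp (fun x => gp_floor (f x)).

(* The point (alpha, n) of R^K x R, as a vector indexed by option K
   (None = the extra coordinate carrying n). *)
Definition join_param {K : Type} (alpha : K -> R) (n : Z) : option K -> R :=
  fun o => match o with None => IZR n | Some k => alpha k end.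

Definition gp_param (K : finType) (Omega : (K -> R) -> Prop) (S : R -> Prop)
    (g : (K -> R) -> Z -> R) : Prop :=
  exists G : (option K -> R) -> R, gp G /\
    forall alpha, Omega alpha -> forall n : Z,
      g alpha n = G (join_param alpha n) /\ S (g alpha n).

Definition gp_extends (K K' : finType) (Omega : (K -> R) -> Prop)
    (Omega' : (K' -> R) -> Prop) (g : (K -> R) -> Z -> R)
    (h : (K' -> R) -> Z -> R) : Prop :=
  exists phi : (K -> R) -> (K' -> R),
    (forall j : K', gp (fun x => phi x j)) /\
    (forall alpha, Omega alpha -> Omega' (phi alpha)) /\
    (forall alpha, Omega alpha -> forall n : Z, g alpha n = h (phi alpha) n).

Definition full_space (K : Type) : (K -> R) -> Prop := fun _ => True.
Definition unit_cube (K : Type) : (K -> R) -> Prop :=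
  fun alpha => forall k, 0 <= alpha k < 1.

Definition digits (M : nat) : R -> Prop :=
  fun y => exists k : nat, Nat.lt k M /\ y = INR k.

From Stdlib Require Import Reals ZArith.
From mathcomp Require Import ssreflect ssrbool eqtype fintype.
From Stdlib Require Import Lra Lia FunctionalExtensionality.
Open Scope R_scope.

(* Every gp map G(a, n) can be written as a finite sum of terms A(a) N(phi(a), n),
   where A is gp, phi is a gp map into a unit cube and N is gp and integer-valued
   at integer n.  Such representations survive sums and products; for the integer
   part one uses that, modulo integers, A N agrees with {A} N, so the fractional
   parts {A(a)} can be adjoined to phi as new cube coordinates, after which
   [G] = G - X + [X] with X a gp function of the cube parameters and n only.
   Finally, if G takes values in {0, ..., M-1} then G = [M {G/M}], and applying
   the same reduction to G/M makes {G/M} a gp function of the cube parameters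
   and n; the map [M {.}] always takes values in {0, ..., M-1}. *)

Definition frac (x : R) : R := x - gp_floor x.
Definition is_int (x : R) : Prop := exists z : Z, x = IZR z.

Lemma floor_bounds (x : R) : gp_floor x <= x < gp_floor x + 1.
Proof. unfold gp_floor. destruct (base_Int_part x). lra. Qed.

Lemma floor_unique (x : R) (z : Z) : IZR z <= x < IZR z + 1 -> gp_floor x = IZR z.
Proof.
  intros [H1 H2]. unfold gp_floor. destruct (base_Int_part x) as [B1 B2]. f_equal.
  assert (A1 : (Int_part x < z + 1)%Z) by (apply lt_IZR; rewrite plus_IZR; simpl; lra).
  assert (A2 : (z < Int_part x + 1)%Z) by (apply lt_IZR; rewrite plus_IZR; simpl; lra).
  lia.
Qed.

Lemma is_int_floor (x : R) : is_int (gp_floor x).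
Proof. exists (Int_part x). reflexivity. Qed.

Lemma floor_addz (x : R) (z : Z) : gp_floor (x + IZR z) = gp_floor x + IZR z.
Proof.
  destruct (is_int_floor x) as [w Hw]. rewrite Hw -plus_IZR. apply floor_unique.
  rewrite plus_IZR -Hw. pose proof (floor_bounds x). lra.
Qed.

Lemma floor_IZR (z : Z) : gp_floor (IZR z) = IZR z.
Proof. apply floor_unique. lra. Qed.

Lemma frac_bounds (x : R) : 0 <= frac x < 1.
Proof. unfold frac. pose proof (floor_bounds x). lra. Qed.

Lemma frac_id (x : R) : 0 <= x < 1 -> frac x = x.
Proof. intros H. unfold frac. rewrite (floor_unique x 0); simpl; lra. Qed.

Lemma frac_eq_mod_int (x y : R) : is_int (x - y) -> frac x = frac y.
Proof.
  intros [z Hz]. replace x with (y + IZR z) by lra. unfold frac. rewrite floor_addz. ring.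
Qed.

Lemma is_int_mul (x y : R) : is_int x -> is_int y -> is_int (x * y).
Proof. intros [a ->] [b ->]. exists (a * b)%Z. now rewrite mult_IZR. Qed.

Lemma is_int_sub_add (x1 x2 y1 y2 : R) :
  is_int (x1 - y1) -> is_int (x2 - y2) -> is_int (x1 + x2 - (y1 + y2)).
Proof.
  intros [z1 E1] [z2 E2]. exists (z1 + z2)%Z. rewrite plus_IZR. lra.
Qed.

Lemma is_int_sub_frac_mul (x y : R) : is_int y -> is_int (x * y - frac x * y).
Proof.
  intros Hy. replace (x * y - frac x * y) with (gp_floor x * y) by (unfold frac; ring).
  exact (is_int_mul _ _ (is_int_floor x) Hy).
Qed.

Lemma digits_floor_frac (M : nat) (x : R) :
  (0 < M)%nat -> digits M (gp_floor (INR M * frac x)).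
Proof.
  intros HM. assert (HM' : 0 < INR M) by (apply lt_0_INR; lia).
  pose proof (frac_bounds x) as Fx.
  destruct (is_int_floor (INR M * frac x)) as [z Hz].
  pose proof (floor_bounds (INR M * frac x)) as B. rewrite Hz in B |- *.
  assert (Y : 0 <= INR M * frac x < INR M) by nra.
  assert (Z0 : (-1 < z)%Z) by (apply lt_IZR; simpl; lra).
  assert (Z1 : (z < Z.of_nat M)%Z) by (apply lt_IZR; rewrite <- INR_IZR_INZ; lra).
  exists (Z.to_nat z). split; [lia|]. rewrite INR_IZR_INZ Z2Nat.id; [reflexivity | lia].
Qed.

Lemma digit_floor_frac (M : nat) (v : R) :
  digits M v -> v = gp_floor (INR M * frac (/ INR M * v)).
Proof.
  intros [k [Hk ->]].
  assert (HM : 0 < INR M) by (apply lt_0_INR; lia).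
  assert (Hkm : INR k < INR M) by (apply lt_INR; lia).
  assert (Hinv : INR M * / INR M = 1) by (field; lra).
  pose proof (pos_INR k). pose proof (Rinv_0_lt_compat _ HM).
  rewrite frac_id; [|split; nra].
  replace (INR M * (/ INR M * INR k)) with (INR k) by (field; lra).
  now rewrite INR_IZR_INZ floor_IZR.
Qed.

Lemma gp_ext {K : finType} (f f' : (K -> R) -> R) :
  gp f -> (forall x, f x = f' x) -> gp f'.
Proof. intros Hf E. replace f' with f; [exact Hf|]. now apply functional_extensionality. Qed.

Lemma gp_comp {K K' : finType} (f : (K -> R) -> R) (u : K -> (K' -> R) -> R) :
  gp f -> (forall k, gp (u k)) -> gp (fun x => f (fun k => u k x)).
Proof.
  intros Hf Hu. induction Hf.
  - apply gp_const.
  - apply Hu.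
  - now apply gp_add.
  - now apply gp_mul.
  - now apply gp_int.
Qed.

Lemma gp_reindex {K K' : finType} (s : K -> K') (f : (K -> R) -> R) :
  gp f -> gp (fun x : K' -> R => f (fun k => x (s k))).
Proof. intros Hf. apply (gp_comp f (fun k x => x (s k)) Hf). intros k. apply gp_coord. Qed.

Lemma gp_frac {K : finType} (f : (K -> R) -> R) : gp f -> gp (fun x => frac (f x)).
Proof.
  intros Hf. apply (gp_ext (fun x => f x + (-1) * gp_floor (f x))).
  - apply gp_add; [exact Hf|]. apply gp_mul; [apply gp_const | now apply gp_int].
  - intros x. unfold frac. ring.
Qed.

Definition gp_family {D J : finType} (phi : (D -> R) -> J -> R) : Prop :=
  forall j, gp (fun a => phi a j).

Definition cube_valued {D J : Type} (phi : (D -> R) -> J -> R) : Prop :=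
  forall a, unit_cube J (phi a).

Definition param_sum {D J1 J2 : Type} (phi1 : (D -> R) -> J1 -> R)
    (phi2 : (D -> R) -> J2 -> R) : (D -> R) -> (J1 + J2)%type -> R :=
  fun a j => match j with inl j1 => phi1 a j1 | inr j2 => phi2 a j2 end.

Lemma gp_family_sum {D J1 J2 : finType} (phi1 : (D -> R) -> J1 -> R)
    (phi2 : (D -> R) -> J2 -> R) :
  gp_family phi1 -> gp_family phi2 -> gp_family (param_sum phi1 phi2).
Proof. intros H1 H2 [j|j]; [apply H1 | apply H2]. Qed.

Lemma cube_valued_sum {D J1 J2 : Type} (phi1 : (D -> R) -> J1 -> R)
    (phi2 : (D -> R) -> J2 -> R) :
  cube_valued phi1 -> cube_valued phi2 -> cube_valued (param_sum phi1 phi2).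
Proof. intros H1 H2 a [j|j]; [apply H1 | apply H2]. Qed.

Lemma join_param_map {J J' : Type} (s : J -> J') (b : J' -> R) (n : Z) :
  (fun o => join_param b n (option_map s o)) = join_param (fun j => b (s j)) n.
Proof. apply functional_extensionality. now intros [j|]. Qed.

Lemma join_param_sum_inl {D J1 J2 : Type} (phi1 : (D -> R) -> J1 -> R)
    (phi2 : (D -> R) -> J2 -> R) a n :
  (fun o => join_param (param_sum phi1 phi2 a) n (option_map inl o)) = join_param (phi1 a) n.
Proof. exact (join_param_map inl (param_sum phi1 phi2 a) n). Qed.

Lemma join_param_sum_inr {D J1 J2 : Type} (phi1 : (D -> R) -> J1 -> R)
    (phi2 : (D -> R) -> J2 -> R) a n :
  (fun o => join_param (param_sum phi1 phi2 a) n (option_map inr o)) = join_param (phi2 a) n.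
Proof. exact (join_param_map inr (param_sum phi1 phi2 a) n). Qed.

Definition int_valued {J : Type} (N : (option J -> R) -> R) : Prop :=
  forall (b : J -> R) (n : Z), is_int (N (join_param b n)).

Lemma int_valued_one {J : Type} : @int_valued J (fun _ => 1).
Proof. intros b n. now exists 1%Z. Qed.

Lemma int_valued_mul {J : Type} (N1 N2 : (option J -> R) -> R) :
  int_valued N1 -> int_valued N2 -> int_valued (fun x => N1 x * N2 x).
Proof. intros H1 H2 b n. apply is_int_mul; [apply H1 | apply H2]. Qed.

Inductive int_comb {D J : finType} : ((D -> R) -> (option J -> R) -> R) -> Prop :=
| int_comb_term (A : (D -> R) -> R) (N : (option J -> R) -> R) :
    gp A -> gp N -> int_valued N -> int_comb (fun a x => A a * N x)
| int_comb_add F1 F2 : int_comb F1 -> int_comb F2 -> int_comb (fun a x => F1 a x + F2 a x).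

Lemma int_comb_ext {D J : finType} (F F' : (D -> R) -> (option J -> R) -> R) :
  int_comb F -> (forall a x, F a x = F' a x) -> int_comb F'.
Proof.
  intros HF E. replace F' with F; [exact HF|].
  apply functional_extensionality; intros a. now apply functional_extensionality.
Qed.

Lemma int_comb_mul {D J : finType} (F1 F2 : (D -> R) -> (option J -> R) -> R) :
  int_comb F1 -> int_comb F2 -> int_comb (fun a x => F1 a x * F2 a x).
Proof.
  intros H1 H2. induction H1 as [A1 N1 HA1 HN1 ZN1|G1 G1' _ IH _ IH'].
  - induction H2 as [A2 N2 HA2 HN2 ZN2|G2 G2' _ IH _ IH'].
    + apply (int_comb_ext (fun a x => (A1 a * A2 a) * (N1 x * N2 x))); [|intros; ring].
      apply int_comb_term; [now apply gp_mul | now apply gp_mul | now apply int_valued_mul].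
    + apply (int_comb_ext _ _ (int_comb_add _ _ IH IH')). intros; ring.
  - apply (int_comb_ext _ _ (int_comb_add _ _ IH IH')). intros; ring.
Qed.

Lemma int_comb_scale {D J : finType} (c : R) (F : (D -> R) -> (option J -> R) -> R) :
  int_comb F -> int_comb (fun a x => c * F a x).
Proof.
  intros HF. apply (int_comb_ext _ _ (int_comb_mul _ _
    (int_comb_term (fun _ => c) (fun _ => 1) (gp_const c) (gp_const 1) int_valued_one) HF)).
  intros; ring.
Qed.

Lemma int_comb_comp {D D' J : finType} (psi : (D' -> R) -> D -> R)
    (F : (D -> R) -> (option J -> R) -> R) :
  gp_family psi -> int_comb F -> int_comb (fun a x => F (psi a) x).
Proof.
  intros Hpsi HF. induction HF as [A N HA HN ZN|F1 F2 _ IH1 _ IH2].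
  - exact (int_comb_term _ N (gp_comp A (fun d a => psi a d) HA Hpsi) HN ZN).
  - exact (int_comb_add _ _ IH1 IH2).
Qed.

Lemma int_comb_reindex {D J J' : finType} (s : J -> J')
    (F : (D -> R) -> (option J -> R) -> R) :
  int_comb F -> int_comb (fun a (x : option J' -> R) => F a (fun o => x (option_map s o))).
Proof.
  intros HF. induction HF as [A N HA HN ZN|F1 F2 _ IH1 _ IH2].
  - apply int_comb_term; [exact HA | exact (gp_reindex (option_map s) N HN) |].
    intros b n. rewrite join_param_map. apply ZN.
  - exact (int_comb_add _ _ IH1 IH2).
Qed.

Lemma int_comb_frac {D J : finType} (F : (D -> R) -> (option J -> R) -> R) :
  int_comb F ->
  exists (K : finType) (psi : (D -> R) -> K -> R) (F' : (K -> R) -> (option J -> R) -> R),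
    gp_family psi /\ cube_valued psi /\ int_comb F' /\
    forall a b n, is_int (F a (join_param b n) - F' (psi a) (join_param b n)).
Proof.
  intros HF. induction HF as [A N HA HN ZN|F1 F2 _ IH1 _ IH2].
  - exists unit, (fun a _ => frac (A a)), (fun c x => c tt * N x).
    split; [intros _; now apply gp_frac|].
    split; [intros a _; apply frac_bounds|].
    split; [exact (int_comb_term (fun c => c tt) N (gp_coord tt) HN ZN)|].
    intros a b n. exact (is_int_sub_frac_mul _ _ (ZN b n)).
  - destruct IH1 as [K1 [psi1 [G1 [P1 [C1 [H1 Z1]]]]]].
    destruct IH2 as [K2 [psi2 [G2 [P2 [C2 [H2 Z2]]]]]].
    exists (K1 + K2)%type, (param_sum psi1 psi2),
      (fun c x => G1 (fun k => c (inl k)) x + G2 (fun k => c (inr k)) x).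
    split; [now apply gp_family_sum|]. split; [now apply cube_valued_sum|].
    split.
    + apply int_comb_add; apply int_comb_comp; auto; intros k; apply gp_coord.
    + intros a b n. exact (is_int_sub_add _ _ _ _ (Z1 a b n) (Z2 a b n)).
Qed.

Definition merge_params {J K : Type} (F : (K -> R) -> (option J -> R) -> R) :
    (option (J + K) -> R) -> R :=
  fun y => F (fun k => y (Some (inr k))) (fun o => y (option_map inl o)).

Lemma gp_merge_params {J K : finType} (F : (K -> R) -> (option J -> R) -> R) :
  int_comb F -> gp (merge_params F).
Proof.
  intros HF. induction HF as [A N HA HN _|F1 F2 _ IH1 _ IH2].
  - apply gp_mul; [exact (gp_reindex (fun k => Some (inr k)) A HA)
                  | exact (gp_reindex (option_map inl) N HN)].
  - exact (gp_add _ _ IH1 IH2).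
Qed.

Lemma merge_params_join {D J K : Type} (phi : (D -> R) -> J -> R)
    (psi : (D -> R) -> K -> R) (F : (K -> R) -> (option J -> R) -> R) a n :
  merge_params F (join_param (param_sum phi psi a) n) = F (psi a) (join_param (phi a) n).
Proof. unfold merge_params. now rewrite join_param_sum_inl. Qed.

Definition cube_rep {I : finType} (G : (option I -> R) -> R) : Prop :=
  exists (J : finType) (phi : (I -> R) -> J -> R) (F : (I -> R) -> (option J -> R) -> R),
    gp_family phi /\ cube_valued phi /\ int_comb F /\
    forall a n, G (join_param a n) = F a (join_param (phi a) n).

Definition no_params {D : Type} : (D -> R) -> Empty_set -> R := fun _ v => match v with end.

Lemma cube_rep_unparametrised {I : finType} (G : (option I -> R) -> R)
    (F : (I -> R) -> (option Empty_set -> R) -> R) :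
  int_comb F ->
  (forall a n, G (join_param a n) = F a (join_param (no_params a) n)) ->
  cube_rep G.
Proof.
  intros HF E. exists Empty_set, no_params, F.
  split; [intros []|]. split; [intros a []|]. now split.
Qed.

Lemma cube_rep_combine {I : finType} (op : R -> R -> R) (f g : (option I -> R) -> R) :
  (forall (J : finType) (F1 F2 : (I -> R) -> (option J -> R) -> R),
      int_comb F1 -> int_comb F2 -> int_comb (fun a x => op (F1 a x) (F2 a x))) ->
  cube_rep f -> cube_rep g -> cube_rep (fun y => op (f y) (g y)).
Proof.
  intros Hop [J1 [phi1 [F1 [P1 [C1 [H1 E1]]]]]] [J2 [phi2 [F2 [P2 [C2 [H2 E2]]]]]].
  exists (J1 + J2)%type, (param_sum phi1 phi2),
    (fun a y => op (F1 a (fun o => y (option_map inl o))) (F2 a (fun o => y (option_map inr o)))).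
  split; [now apply gp_family_sum|]. split; [now apply cube_valued_sum|].
  split; [exact (Hop _ _ _ (int_comb_reindex inl F1 H1) (int_comb_reindex inr F2 H2))|].
  intros a n. now rewrite join_param_sum_inl join_param_sum_inr E1 E2.
Qed.

Lemma cube_rep_floor {I : finType} (f : (option I -> R) -> R) :
  cube_rep f -> cube_rep (fun y => gp_floor (f y)).
Proof.
  intros [J [phi [F [P [C [H E]]]]]].
  destruct (int_comb_frac F H) as [K [psi [F' [Ppsi [Cpsi [H' Z']]]]]].
  exists (J + K)%type, (param_sum phi psi),
    (fun a y => F a (fun o => y (option_map inl o))
                + -1 * F' (psi a) (fun o => y (option_map inl o))
                + 1 * gp_floor (merge_params F' y)).
  split; [now apply gp_family_sum|]. split; [now apply cube_valued_sum|].
  split.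
  - apply int_comb_add; [apply int_comb_add|].
    + exact (int_comb_reindex inl F H).
    + exact (int_comb_reindex inl _ (int_comb_scale (-1) _ (int_comb_comp psi F' Ppsi H'))).
    + apply int_comb_term; [apply gp_const | now apply gp_int, gp_merge_params |].
      intros b n. apply is_int_floor.
  - intros a n. cbv beta. rewrite join_param_sum_inl merge_params_join E.
    destruct (Z' a (phi a) n) as [z Hz].
    set (X := F' (psi a) (join_param (phi a) n)) in *.
    replace (F a (join_param (phi a) n)) with (X + IZR z) by lra.
    rewrite floor_addz. ring.
Qed.

Lemma gp_cube_rep {I : finType} (G : (option I -> R) -> R) : gp G -> cube_rep G.
Proof.
  intros HG. induction HG as [c|[i|]|f g _ IHf _ IHg|f g _ IHf _ IHg|f _ IHf].
  - apply (cube_rep_unparametrised _ (fun _ _ => c * 1)); [|intros; ring].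
    exact (int_comb_term _ _ (gp_const c) (gp_const 1) int_valued_one).
  - apply (cube_rep_unparametrised _ (fun a _ => a i * 1)); [|intros; simpl; ring].
    exact (int_comb_term _ _ (gp_coord i) (gp_const 1) int_valued_one).
  - apply (cube_rep_unparametrised _ (fun _ x => 1 * x None)); [|intros; simpl; ring].
    apply (int_comb_term _ _ (gp_const 1) (gp_coord None)).
    intros b n. now exists n.
  - exact (cube_rep_combine Rplus f g (fun J => int_comb_add) IHf IHg).
  - exact (cube_rep_combine Rmult f g (fun J => int_comb_mul) IHf IHg).
  - now apply cube_rep_floor.
Qed.

Theorem proposition3p5 (M : nat) (I : finType) (g : (I -> R) -> Z -> R) :
  gp_param I (full_space I) (digits M) g ->
  exists (J : finType) (h : (J -> R) -> Z -> R),
    gp_param J (unit_cube J) (digits M) h /\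
    gp_extends I J (full_space I) (unit_cube J) g h.
Proof.
  intros [G [HG Hg]].
  assert (HM : (0 < M)%nat).
  { destruct (Hg (fun _ => 0) Logic.I 0%Z) as [_ [k [Hk _]]]. lia. }
  destruct (gp_cube_rep G HG) as [J [phi [F [Hphi [Cphi [HF EF]]]]]].
  destruct (int_comb_frac _ (int_comb_scale (/ INR M) F HF))
    as [K [psi [F' [Hpsi [Cpsi [HF' ZF']]]]]].
  exists (J + K)%type, (fun y n => gp_floor (INR M * frac (merge_params F' (join_param y n)))).
  split.
  - exists (fun y => gp_floor (INR M * frac (merge_params F' y))). split.
    + apply gp_int, gp_mul; [apply gp_const|]. now apply gp_frac, gp_merge_params.
    + intros y _ n. split; [reflexivity|]. now apply digits_floor_frac.
  - exists (param_sum phi psi).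
    split; [now apply gp_family_sum|]. split; [intros a _; exact (cube_valued_sum _ _ Cphi Cpsi a)|].
    intros a _ n. destruct (Hg a Logic.I n) as [Hga Hdig]. rewrite Hga in Hdig |- *.
    rewrite {1}(digit_floor_frac M _ Hdig) merge_params_join. f_equal; f_equal.
    rewrite EF. exact (frac_eq_mod_int _ _ (ZF' a (phi a) n)).
Qed.
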